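(* Let $(\mathcal{P},\cdot)$ be a finite-dimensional admissible Poisson algebra which is not a nilalgebra. Then $\mathcal{P}$ contains a non-zero idempotent $e$, i.e. $e\ne0$ and $e\cdot e=e$.
   Context: $\mathbb{K}$ is a field of characteristic different from $2$ and $3$. Associator: $A(X,Y,Z)=(X\cdot Y)\cdot Z-X\cdot(Y\cdot Z)$. An admissible Poisson algebra is a $\mathbb{K}$-vector space $\mathcal{P}$ with a bilinear product $\cdot$ satisfying $3A(X,Y,Z)=(X\cdot Z)\cdot Y+(Y\cdot Z)\cdot X-(Y\cdot X)\cdot Z-(Z\cdot X)\cdot Y$ for all $X,Y,Z$. Powers: $X^1=X$, $X^{i+1}=X\cdot X^i$. An element $X$ is nilpotent if $X^r=0$ for some $r$; $\mathcal{P}$ is a nilalgebra if every element is nilpotent. *)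

From HB Require Import structures.
From mathcomp Require Import all_boot all_order all_algebra.
Set Implicit Arguments. Unset Strict Implicit. Unset Printing Implicit Defensive.
Import GRing.Theory.
Local Open Scope ring_scope.

Definition bilinear_prod (K : fieldType) (V : lmodType K) (mul : V -> V -> V) :=
  (forall (a : K) (x y z : V), mul (a *: x + y) z = a *: mul x z + mul y z) /\
  (forall (a : K) (x y z : V), mul x (a *: y + z) = a *: mul x y + mul x z).

Definition assoc (K : fieldType) (V : lmodType K) (mul : V -> V -> V) (x y z : V) :=
  mul (mul x y) z - mul x (mul y z).

Definition admissible_poisson (K : fieldType) (V : lmodType K) (mul : V -> V -> V) :=
  forall x y z : V,
    assoc mul x y z *+ 3 =
      mul (mul x z) y + mul (mul y z) x - mul (mul y x) z - mul (mul z x) y.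

(* Powers: X^1 = X, X^(i+1) = X . X^i.  ppow mul x n = x^(n+1). *)
Fixpoint ppow (K : fieldType) (V : lmodType K) (mul : V -> V -> V) (x : V) (n : nat) : V :=
  match n with
  | 0 => x
  | n'.+1 => mul x (ppow mul x n')
  end.

Definition nilpotent_elt (K : fieldType) (V : lmodType K) (mul : V -> V -> V) (x : V) :=
  exists r : nat, ppow mul x r = 0.

Definition nilalgebra (K : fieldType) (V : lmodType K) (mul : V -> V -> V) :=
  forall x : V, nilpotent_elt mul x.

From HB Require Import structures.
From mathcomp Require Import all_boot all_order all_algebra.
From mathcomp Require Import ring.
From Stdlib Require Import Classical.
Import GRing.Theory.
Set Implicit Arguments.
Unset Strict Implicit.
Unset Printing Implicit Defensive.

Local Open Scope ring_scope.

(* In an admissible Poisson algebra the anticommutator x ∘ y = xy + yx and the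
   commutator [x, y] = xy - yx satisfy, three times over, integer combinations
   of the admissibility identity: ∘ is associative and [x, -] is a derivation
   of ∘.  Hence the ∘-powers of x pairwise commute, and since xy is half of
   x ∘ y + [x, y], the powers of x multiply as x^i x^j = x^(i+j).  For x not
   nilpotent, p |-> ('X * p)(x) is then a multiplicative linear map from K[X]
   into the finite-dimensional V, so it kills some h = 'X^m * g with
   g(0) != 0; the idempotent of K[X]/(h) that vanishes modulo 'X^m gives the
   idempotent of V, which is nonzero because x^(m+1) is. *)

Inductive zexpr :=
  | ZAtom of nat | ZAdd of zexpr & zexpr | ZOpp of zexpr | ZZero
  | ZMuln of zexpr & nat.

Section ZmodNormalization.
Variables (V : zmodType) (env : seq V).

Fixpoint zeval t : V :=
  match t with
  | ZAtom i => env`_i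
  | ZAdd a b => zeval a + zeval b
  | ZOpp a => - zeval a
  | ZZero => 0
  | ZMuln a n => zeval a *+ n
  end.

Fixpoint zcoef t (i : nat) : int :=
  match t with
  | ZAtom j => (i == j)%:Z
  | ZAdd a b => zcoef a i + zcoef b i
  | ZOpp a => - zcoef a i
  | ZZero => 0
  | ZMuln a n => zcoef a i * n%:Z
  end.

Lemma zevalE t : zeval t = \sum_(i < size env) env`_i *~ zcoef t i.
Proof.
elim: t => [j|a IHa b IHb|a IHa||a IHa n] /=.
- have [lt_j|le_j] := ltnP j (size env).
    rewrite (bigD1 (Ordinal lt_j)) //= eqxx mulr1z big1 ?addr0 // => i.
    by rewrite -val_eqE /= => /negPf ->.
  rewrite nth_default // big1 // => i _.
  by rewrite eq_sym (gtn_eqF (leq_trans (ltn_ord i) le_j)) mulr0z.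
- by rewrite IHa IHb -big_split; apply: eq_bigr => i _; rewrite mulrzDr.
- by rewrite IHa -sumrN; apply: eq_bigr => i _; rewrite mulrNz.
- by rewrite big1 // => i _; rewrite mulr0z.
- by rewrite IHa -sumrMnl; apply: eq_bigr => i _; rewrite mulrzA -pmulrn.
Qed.

Lemma zeval_eq t1 t2 :
  all (fun i => zcoef t1 i == zcoef t2 i) (iota 0 (size env)) ->
  zeval t1 = zeval t2.
Proof.
move=> /allP eq_coef; rewrite !zevalE; apply: eq_bigr => i _.
by rewrite (eqP (eq_coef i _)) // mem_iota /=.
Qed.

End ZmodNormalization.

Ltac zmod_mem x l :=
  lazymatch l with
  | nil => constr:(false)
  | cons x _ => constr:(true)
  | cons _ ?l' => zmod_mem x l'
  end.

Ltac zmod_index x l :=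
  lazymatch l with
  | cons x _ => constr:(0%N)
  | cons _ ?l' => let n := zmod_index x l' in constr:(S n)
  end.

Ltac zmod_atoms t acc :=
  lazymatch t with
  | ?a + ?b => let acc := zmod_atoms a acc in zmod_atoms b acc
  | - ?a => zmod_atoms a acc
  | 0 => acc
  | ?a *+ _ => zmod_atoms a acc
  | _ => let b := zmod_mem t acc in
         lazymatch b with true => acc | false => constr:(t :: acc) end
  end.

Ltac zmod_reify env t :=
  lazymatch t with
  | ?a + ?b =>
      let ra := zmod_reify env a in
      let rb := zmod_reify env b in constr:(ZAdd ra rb)
  | - ?a => let ra := zmod_reify env a in constr:(ZOpp ra)
  | 0 => constr:(ZZero)
  | ?a *+ ?n => let ra := zmod_reify env a in constr:(ZMuln ra n)
  | _ => let i := zmod_index t env in constr:(ZAtom i)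
  end.

(* [ring] needs a ring structure; this proves an identity between integer
   combinations of atoms in a Z-module by comparing their coefficients. *)
Ltac zmod_lincomb :=
  lazymatch goal with |- ?l = ?r =>
    let T := type of l in
    let env := zmod_atoms l (@nil T) in
    let env := zmod_atoms r env in
    let tl := zmod_reify env l in
    let tr := zmod_reify env r in
    change (zeval env tl = zeval env tr); apply: zeval_eq; exact (erefl true)
  end.

Section BilinearProduct.
Variables (K : fieldType) (V : lmodType K) (mul : V -> V -> V).
Hypothesis mul_bilinear : bilinear_prod mul.

Lemma bmulDl x y z : mul (x + y) z = mul x z + mul y z.
Proof. by have := (proj1 mul_bilinear) 1 x y z; rewrite !scale1r. Qed.

Lemma bmulDr x y z : mul z (x + y) = mul z x + mul z y.
Proof. by have := (proj2 mul_bilinear) 1 z x y; rewrite !scale1r. Qed.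

Lemma bmul0l z : mul 0 z = 0.
Proof. by apply: (addrI (mul 0 z)); rewrite -bmulDl !addr0. Qed.

Lemma bmul0r z : mul z 0 = 0.
Proof. by apply: (addrI (mul z 0)); rewrite -bmulDr !addr0. Qed.

Lemma bmulZl a x z : mul (a *: x) z = a *: mul x z.
Proof. by have := (proj1 mul_bilinear) a x 0 z; rewrite !addr0 bmul0l addr0. Qed.

Lemma bmulZr a x z : mul z (a *: x) = a *: mul z x.
Proof. by have := (proj2 mul_bilinear) a z x 0; rewrite !addr0 bmul0r addr0. Qed.

Lemma bmulNl x z : mul (- x) z = - mul x z.
Proof. by rewrite -scaleN1r bmulZl scaleN1r. Qed.

Lemma bmulNr x z : mul z (- x) = - mul z x.
Proof. by rewrite -scaleN1r bmulZr scaleN1r. Qed.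

Lemma bmulMnl x z n : mul (x *+ n) z = mul x z *+ n.
Proof. by rewrite -!scaler_nat bmulZl. Qed.

Lemma bmulMnr x z n : mul z (x *+ n) = mul z x *+ n.
Proof. by rewrite -!scaler_nat bmulZr. Qed.

Lemma bmul_suml (I : Type) (r : seq I) (P : pred I) (F : I -> V) z :
  mul (\sum_(i <- r | P i) F i) z = \sum_(i <- r | P i) mul (F i) z.
Proof. exact: (big_morph (mul^~ z) (fun x y => bmulDl x y z) (bmul0l z)). Qed.

Lemma bmul_sumr (I : Type) (r : seq I) (P : pred I) (F : I -> V) z :
  mul z (\sum_(i <- r | P i) F i) = \sum_(i <- r | P i) mul z (F i).
Proof. exact: (big_morph (mul z) (fun x y => bmulDr x y z) (bmul0r z)). Qed.

Definition bmulE := (bmul0l, bmul0r, bmulDl, bmulDr, bmulNl, bmulNr).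

End BilinearProduct.

Section AdmissiblePoisson.
Variables (K : fieldType) (V : lmodType K) (mul : V -> V -> V).
Hypothesis mul_bilinear : bilinear_prod mul.
Hypothesis mul_admissible : admissible_poisson mul.

Definition anticommutator x y := mul x y + mul y x.
Definition commutator x y := mul x y - mul y x.

Local Notation "x ** y" := (mul x y) (at level 40, left associativity).
Local Notation "x ∘ y" := (anticommutator x y) (at level 40, left associativity).
Local Notation "[ x , y ]" := (commutator x y).

Lemma anticommutator0l y : 0 ∘ y = 0.
Proof. by rewrite /anticommutator !(bmulE mul_bilinear) addr0. Qed.

Lemma anticommutator0r y : y ∘ 0 = 0.
Proof. by rewrite /anticommutator !(bmulE mul_bilinear) addr0. Qed.

Lemma commutatorC x y : [x, y] = - [y, x].
Proof. by rewrite /commutator opprB. Qed.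

Lemma commutatorxx x : [x, x] = 0.
Proof. exact: subrr. Qed.

Lemma double_bmulE x y : x ** y *+ 2 = x ∘ y + [x, y].
Proof. by rewrite /anticommutator /commutator; zmod_lincomb. Qed.

Let defect x y z :=
  assoc mul x y z *+ 3 -
    ((x ** z) ** y + (y ** z) ** x - (y ** x) ** z - (z ** x) ** y).

Let defect0 x y z : defect x y z = 0.
Proof. by rewrite /defect mul_admissible subrr. Qed.

Hypothesis three_neq0 : (3%:R : K) != 0.

Let mulrn3_inj : injective (fun v : V => v *+ 3).
Proof.
move=> u v /eqP; rewrite -subr_eq0 -mulrnBl -scaler_nat scaler_eq0.
by rewrite (negbTE three_neq0) subr_eq0 => /eqP.
Qed.

Lemma anticommutatorA u v w : (u ∘ v) ∘ w = u ∘ (v ∘ w).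
Proof.
apply: mulrn3_inj => /=.
have -> : ((u ∘ v) ∘ w) *+ 3 = (u ∘ (v ∘ w)) *+ 3 +
    (defect u v w + defect u w v - defect w u v - defect w v u).
  by rewrite /defect /anticommutator /assoc !(bmulE mul_bilinear); zmod_lincomb.
by rewrite !defect0 !(addr0, subr0).
Qed.

Lemma commutator_anticommutatorr u v w : [u, v ∘ w] = [u, v] ∘ w + v ∘ [u, w].
Proof.
apply: mulrn3_inj => /=.
have -> : [u, v ∘ w] *+ 3 = ([u, v] ∘ w + v ∘ [u, w]) *+ 3 +
    (- defect u v w - defect u w v + defect v u w - defect v w u
     + defect w u v - defect w v u).
  rewrite /defect /anticommutator /commutator /assoc.
  by rewrite !(bmulE mul_bilinear); zmod_lincomb.
by rewrite !defect0 !(addr0, subr0, oppr0).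
Qed.

Section Powers.
Variable x : V.

Fixpoint apow n := if n is n'.+1 then x ∘ apow n' else x.

Lemma commutator_x_apow n : [x, apow n] = 0.
Proof.
elim: n => [|n IH] /=; first exact: commutatorxx.
rewrite commutator_anticommutatorr commutatorxx IH.
by rewrite anticommutator0l anticommutator0r addr0.
Qed.

Lemma apowE n : apow n = ppow mul x n *+ 2 ^ n.
Proof.
elim: n => [|n IH] //=.
have -> : x ∘ apow n = x ** apow n *+ 2 - [x, apow n].
  by rewrite double_bmulE addrK.
by rewrite commutator_x_apow subr0 IH (bmulMnr mul_bilinear) -mulrnA expnS mulnC.
Qed.

Lemma anticommutator_apow i j : apow i ∘ apow j = apow (i + j).+1.
Proof. by elim: i => [|i IH] //=; rewrite anticommutatorA IH. Qed.

Lemma commutator_apow i j : [apow i, apow j] = 0.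
Proof.
have commutator_apow_x k : [apow k, x] = 0.
  by rewrite commutatorC commutator_x_apow oppr0.
elim: j => [|j IH] /=; first exact: commutator_apow_x.
rewrite commutator_anticommutatorr commutator_apow_x IH.
by rewrite anticommutator0l anticommutator0r addr0.
Qed.

Lemma bmul_ppow (two_neq0 : (2%:R : K) != 0) i j :
  ppow mul x i ** ppow mul x j = ppow mul x (i + j).+1.
Proof.
have := double_bmulE (apow i) (apow j).
rewrite anticommutator_apow commutator_apow addr0 !apowE.
rewrite (bmulMnl mul_bilinear) (bmulMnr mul_bilinear) -!mulrnA.
rewrite -expnSr -expnD addnC -!scaler_nat => /scalerI; apply.
by rewrite natrX expf_neq0.
Qed.

End Powers.

End AdmissiblePoisson.

Section PolyComb.
Variables (K : fieldType) (V : lmodType K) (v : nat -> V).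

Definition pcomb (p : {poly K}) : V := \sum_(i < size p) p`_i *: v i.

Lemma pcomb_widen n (p : {poly K}) :
  (size p <= n)%N -> pcomb p = \sum_(i < n) p`_i *: v i.
Proof.
move=> le_p_n; rewrite /pcomb (big_ord_widen n (fun i => p`_i *: v i)) //.
rewrite big_mkcond; apply: eq_bigr => i _.
by case: ltnP => // le_p_i; rewrite nth_default ?scale0r.
Qed.

Lemma pcombL a p q : pcomb (a *: p + q) = a *: pcomb p + pcomb q.
Proof.
pose n := maxn (size p) (size q).
have le_p : (size p <= n)%N by rewrite leq_maxl.
have le_q : (size q <= n)%N by rewrite leq_maxr.
have le_apq : (size (a *: p + q)%R <= n)%N.
  rewrite (leq_trans (size_polyD _ _)) // geq_max le_q andbT.
  exact: leq_trans (size_scale_leq _ _) le_p.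
rewrite (pcomb_widen le_apq) (pcomb_widen le_p) (pcomb_widen le_q) scaler_sumr.
rewrite -big_split; apply: eq_big => // i _.
by rewrite coefD coefZ scalerDl scalerA.
Qed.

HB.instance Definition _ := GRing.isLinear.Build K {poly K} V *:%R pcomb pcombL.

Lemma pcombXn m : pcomb 'X^m = v m.
Proof.
rewrite /pcomb size_polyXn big_ord_recr /= coefXn eqxx scale1r.
rewrite big1 ?add0r // => i _.
by rewrite coefXn ltn_eqF ?scale0r.
Qed.

End PolyComb.

Lemma pcomb_ker (K : fieldType) (V : vectType K) (v : nat -> V) :
  exists2 p : {poly K}, p != 0 & pcomb v p = 0.
Proof.
pose n := \dim {: V}; pose X := [tuple v i | i < n.+1].
have X_dep : ~~ free X.
  apply/negP => /eqP dim_X.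
  by have := dimvS (subvf <<X>>); rewrite dim_X size_tuple ltnn.
have [k k_rel [i ki_neq0]] : exists2 k : 'I_n.+1 -> K,
    \sum_(i < n.+1) k i *: X`_i = 0 & exists i, k i != 0.
  apply: NNPP => no_k; apply: (negP X_dep); apply/freeP => k k_rel i.
  by apply: NNPP => /eqP ki_neq0; apply: no_k; exists k => //; exists i.
exists (\poly_(i < n.+1) k (inord i)).
  apply: contra ki_neq0 => /eqP p0.
  have := coef_poly n.+1 (fun i => k (inord i)) i.
  by rewrite p0 coef0 ltn_ord inord_val => <-.
rewrite (pcomb_widen _ (size_poly _ _)) -[RHS]k_rel; apply: eq_bigr => j _.
by rewrite coef_poly ltn_ord inord_val nth_mktuple.
Qed.

Section PowerCombinations.
Variables (K : fieldType) (V : lmodType K) (mul : V -> V -> V) (x : V).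
Hypothesis mul_bilinear : bilinear_prod mul.

(* [peval p] is the value of 'X * p at x, as [ppow mul x i] is x^(i+1). *)
Local Notation peval := (pcomb (ppow mul x)).

Lemma pcombX (p : {poly K}) : peval ('X * p) = mul x (peval p).
Proof.
have [->|p_neq0] := eqVneq p 0; first by rewrite mulr0 linear0 bmul0r.
rewrite mulrC /pcomb size_mulX // big_ord_recl coefMX /= scale0r add0r.
rewrite bmul_sumr //; apply: eq_bigr => i _.
by rewrite coefMX /bump /= add0n bmulZr.
Qed.

Lemma pcomb_dvdp (h q : {poly K}) : peval h = 0 -> h %| q -> peval q = 0.
Proof.
move=> h_ker /dvdpP[r ->].
elim/poly_ind: r => [|r c IH]; first by rewrite mul0r linear0.
rewrite mulrDl (mulrC r) -mulrA linearD /= pcombX IH bmul0r // add0r.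
by rewrite mul_polyC linearZ /= h_ker scaler0.
Qed.

Lemma pcomb_XnM i (q : {poly K}) :
  peval ('X ^+ i.+1 * q) = \sum_(j < size q) q`_j *: ppow mul x (i + j).+1.
Proof.
elim: i => [|i IH]; last rewrite exprS -mulrA pcombX IH.
  by rewrite expr1 pcombX bmul_sumr //; apply: eq_bigr => j _; rewrite bmulZr.
by rewrite bmul_sumr //; apply: eq_bigr => j _; rewrite bmulZr.
Qed.

Hypothesis x_power_assoc :
  forall i j, mul (ppow mul x i) (ppow mul x j) = ppow mul x (i + j).+1.

Lemma pcombM (p q : {poly K}) : mul (peval p) (peval q) = peval ('X * p * q).
Proof.
have -> : 'X * p * q = \sum_(i < size p) p`_i *: ('X ^+ i.+1 * q).
  rewrite -{1}[p]coefK poly_def mulr_sumr mulr_suml; apply: eq_bigr => i _.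
  by rewrite -scalerAr -scalerAl exprS.
rewrite linear_sum /pcomb bmul_suml //; apply: eq_bigr => i _.
rewrite linearZ /= -/(pcomb _ _) pcomb_XnM bmulZl // bmul_sumr //.
by congr (_ *: _); apply: eq_bigr => j _; rewrite bmulZr // x_power_assoc.
Qed.

End PowerCombinations.

(* For h = 'X^m * g with g(0) != 0 and u * g + w * 'X^m.+1 = 1, 'X * P with
   P := w * 'X^m is the idempotent of K[X]/(h) that is 1 modulo g and 0 modulo
   'X^m. *)
Lemma exists_idempotent_mod_poly (K : fieldType) (h : {poly K}) : h != 0 ->
  exists m (P : {poly K}), h %| 'X^m - P * 'X ^+ m.+1 /\ h %| 'X * P * P - P.
Proof.
move=> h_neq0; have [m [g g0 def_h]] := multiplicity_XsubC h 0.
rewrite h_neq0 /= in g0; rewrite polyC0 subr0 in def_h.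
have cop_g_Xm : coprimep g ('X ^+ m.+1).
  by apply: coprimep_expr; rewrite coprimepX.
have [[u w] /= bezout] := Bezout_eq1_coprimepP _ _ cop_g_Xm.
exists m, (w * 'X^m); split; apply/dvdpP.
  by exists u; rewrite def_h -[X in X - _]mulr1 -bezout exprS; ring.
by exists (- (u * w)); rewrite def_h -[X in _ - X]mulr1 -bezout exprS; ring.
Qed.

Theorem mainTheorem4 (K : fieldType) (V : vectType K) (mul : V -> V -> V) :
  ~~ (2%N \in [pchar K]) -> ~~ (3%N \in [pchar K]) ->
  bilinear_prod mul -> admissible_poisson mul -> ~ nilalgebra mul ->
  exists e : V, e != 0 /\ mul e e = e.
Proof.
move=> char2 char3 mul_bilinear mul_admissible not_nil.
have two_neq0 : (2%:R : K) != 0 by move: char2; rewrite inE.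
have three_neq0 : (3%:R : K) != 0 by move: char3; rewrite inE.
have [x x_nonnil] : exists x, forall r, ppow mul x r != 0.
  apply: NNPP => no_x; apply: not_nil => x; apply: NNPP => x_nonnil.
  by apply: no_x; exists x => r; apply/eqP => xr0; apply: x_nonnil; exists r.
have x_power_assoc := bmul_ppow mul_bilinear mul_admissible three_neq0 x two_neq0.
have [h h_neq0 h_ker] := pcomb_ker (ppow mul x).
have [m [P [dvd_Xm dvd_idem]]] := exists_idempotent_mod_poly h_neq0.
exists (pcomb (ppow mul x) P); split.
  apply: contra (x_nonnil m) => /eqP P_ker.
  rewrite -(pcombXn (ppow mul x)) -(subrK (P * 'X ^+ m.+1) 'X^m) linearD /=.
  by rewrite (pcomb_dvdp _ h_ker) // (pcomb_dvdp _ P_ker) ?dvdp_mulIl ?addr0.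
rewrite (pcombM mul_bilinear x_power_assoc); apply/eqP.
by rewrite -subr_eq0 -linearB /= (pcomb_dvdp _ h_ker).
Qed.
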